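(* Let $\mathbb{F}_r$ be the free group on $r$ free generators, $r\in\mathbb{N}\cup\{\infty\}$, $r\ge1$. Then: (1) the function $g\mapsto\|g\|_2^2$ is conditionally negative definite on $\mathbb{F}_r$; equivalently, for every $s\in[0,1]$ the function $g\mapsto s^{\|g\|_2^2}$ is positive definite on $\mathbb{F}_r$; (2) the function $g\mapsto(-1)^{\|g\|_2^2}$ is positive definite on $\mathbb{F}_r$. Consequently, for every $s\in[-1,1]$ the function $g\mapsto s^{\|g\|_2^2}$ (with the convention $0^0=1$) is positive definite on $\mathbb{F}_r$.
   Context: Every $g\ne e$ in $\mathbb{F}_r$ has a unique reduced form $g = a_1^{k_1}\cdots a_n^{k_n}$ with $a_j$ free generators, $a_j\neq a_{j+1}$, $k_j\in\mathbb{Z}\setminus\{0\}$; $\|g\|_2^2 := \sum_{j=1}^n k_j^2$ and $\|e\|_2=0$. A function $\varphi$ on a group is positive definite if $\sum_{j,k=1}^n c_j\overline{c_k}\varphi(x_j^{-1}x_k)\ge0$ for all $n$, $x_i$ in the group, $c_i\in\mathbb{C}$; a function $\psi$ is conditionally negative definite if $\psi(g^{-1})=\overline{\psi(g)}$ and $\sum_{j,k} c_j\overline{c_k}\psi(x_j^{-1}x_k)\le0$ whenever $\sum_j c_j=0$. *)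

From mathcomp Require Import all_boot all_order all_algebra.
From mathcomp Require Import Rstruct.
From mathcomp.real_closed Require Import complex.
From Stdlib Require Import Reals.
Set Implicit Arguments. Unset Strict Implicit. Unset Printing Implicit Defensive.
Import Order.TTheory GRing.Theory Num.Theory.

(* Generators are a_0, a_1, ... indexed by nat.  The rank is an            *)
(* [option nat]: [Some n] means r = n (generators a_0..a_{n-1}),           *)
(* [None] means r = oo (generators a_0, a_1, ... all of nat).             *)
(* An element is represented by its unique reduced form                    *)
(*   a_{i_1}^{k_1} ... a_{i_m}^{k_m}  as the list [(i_1,k_1);...;(i_m,k_m)] *)
(* with k_j <> 0 and i_j <> i_{j+1}; the identity is [::].                 *)

Local Open Scope ring_scope.

Definition word := seq (nat * int).

Definition rank := option nat.

Definition gen_ok (r : rank) (a : nat) : bool :=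
  if r is Some n then (a < n)%nat else true.

Fixpoint reduced (w : word) : bool :=
  match w with
  | [::] => true
  | (a, k) :: w' =>
      (k != 0 :> int) &&
      (if w' is (b, _) :: _ then a != b else true) &&
      reduced w'
  end.

Definition in_Fr (r : rank) (w : word) : bool :=
  reduced w && all (fun p => gen_ok r p.1) w.

Definition push (p : nat * int) (w : word) : word :=
  let: (a, k) := p in
  match w with
  | [::] => if k == 0 :> int then [::] else [:: (a, k)]
  | (b, l) :: w' =>
      if a == b then (if k + l == 0 :> int then w' else (a, (k + l)) :: w')
      else if k == 0 :> int then w else (a, k) :: w
  end.

Definition fg_mul (u v : word) : word := foldr push v u.
Definition fg_inv (u : word) : word := rev (map (fun p => (p.1, (- p.2))) u).

Definition norm2sq (w : word) : nat := \sum_(p <- w) expn (absz p.2) 2.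

Notation C := (complex Rdefinitions.R).

Definition pos_def_Fr (r : rank) (phi : word -> C) : Prop :=
  forall (n : nat) (x : 'I_n -> word) (c : 'I_n -> C),
    (forall i, in_Fr r (x i)) ->
    0 <= \sum_(j < n) \sum_(k < n) c j * (c k)^* * phi (fg_mul (fg_inv (x j)) (x k)).

Definition cond_neg_def_Fr (r : rank) (psi : word -> C) : Prop :=
  (forall g, in_Fr r g -> psi (fg_inv g) = (psi g)^*) /\
  forall (n : nat) (x : 'I_n -> word) (c : 'I_n -> C),
    (forall i, in_Fr r (x i)) ->
    \sum_(j < n) c j = 0 ->
    \sum_(j < n) \sum_(k < n) c j * (c k)^* * psi (fg_mul (fg_inv (x j)) (x k)) <= 0.

(* Attach to a reduced word w = a_1^k_1 ... a_m^k_m the integer vector v_w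
   whose coordinate at (a_1^k_1 ... a_(j-1)^k_(j-1), a_j) is k_j, all others
   being 0.  Free cancellation in u^-1 w only eats the common initial syllables
   of u and w, and then ||u^-1 w||^2 = ||v_u - v_w||^2
   = ||u||^2 + ||w||^2 - 2 <v_u, v_w>.  So ||.||^2 is a squared euclidean
   distance, hence conditionally negative definite, and for 0 < s <= 1
   s^||u^-1 w||^2 = s^||u||^2 s^||w||^2 exp (-2 ln s <v_u, v_w>) is positive
   definite: the exponential of a nonnegative multiple of a Gram kernel is a
   limit of nonnegative combinations of its Schur powers, which are Gram
   kernels again.  For s = 0 the kernel is the indicator of u = w, and for
   s < 0 it is the kernel of |s| rescaled by the signs (-1)^||u||^2 and
   (-1)^||w||^2, because ||u^-1 w||^2 = ||u||^2 + ||w||^2 mod 2.  Over C,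
   positivity reduces to the real case since all kernels are real and
   symmetric. *)

From mathcomp Require Import all_boot all_order all_algebra.
From mathcomp Require Import Rstruct.
From mathcomp.real_closed Require Import complex.
From Stdlib Require Import Reals.
From mathcomp Require Import zify ring lra.
Set Implicit Arguments. Unset Strict Implicit. Unset Printing Implicit Defensive.
Import Order.TTheory GRing.Theory Num.Theory.
Local Open Scope ring_scope.

(* Stdlib binds the argument of exp to R_scope; read it with the ring
   operations instead. *)
Local Arguments exp x%_ring_scope.

Local Notation "x %:C" := (real_complex R x).

Lemma signr_eq_mod2 (p q : nat) (z : int) :
  p%:Z = q%:Z - 2 * z -> (-1) ^+ p = (-1) ^+ q :> R.
Proof.
have signr_double m : (-1) ^+ (2 * m) = 1 :> R by rewrite exprM sqrrN !expr1n.
case: z => m pq_eq.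
  have -> : q = (p + 2 * m)%N by lia.
  by rewrite exprD signr_double mulr1.
have -> : p = (q + 2 * m.+1)%N by move: pq_eq; rewrite NegzE; lia.
by rewrite exprD signr_double mulr1.
Qed.

Lemma ln_le0 (s : R) : 0 < s <= 1 -> ln s <= 0.
Proof.
move=> /andP[s_gt0 s_le1]; have [->|s_neq1] := eqVneq s 1; first by rewrite ln_1.
have s_lt1 : s < 1 by rewrite lt_neqAle s_neq1.
have /RltP := ln_increasing _ _ (elimT RltP s_gt0) (elimT RltP s_lt1).
by rewrite ln_1 => /ltW.
Qed.

Lemma Un_cv_const (c : R) : Un_cv (fun _ => c) c.
Proof. by move=> e e_gt0; exists 0%N => N _; rewrite RdistE subrr normr0. Qed.

Lemma Un_cv_sum (I : Type) (r : seq I) (u : I -> nat -> R) (l : I -> R) :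
  (forall i, Un_cv (u i) (l i)) ->
  Un_cv (fun N => \sum_(i <- r) u i N) (\sum_(i <- r) l i).
Proof.
move=> cvg_u; elim: r => [|i r IH].
  by apply: (Un_cv_ext (fun _ => 0)) => [N|]; rewrite big_nil //; exact: Un_cv_const.
apply: (Un_cv_ext (fun N => u i N + \sum_(j <- r) u j N)) => [N|].
  by rewrite big_cons.
by rewrite big_cons; exact: CV_plus.
Qed.

Section Kernels.
Variable n : nat.
Implicit Types (K G : 'I_n -> 'I_n -> R) (a d : 'I_n -> R).

Definition quad_form K a := \sum_j \sum_k a j * a k * K j k.

Definition psd_kernel K := forall a, 0 <= quad_form K a.

Lemma eq_psd_kernel K G : (forall j k, K j k = G j k) -> psd_kernel K -> psd_kernel G.
Proof.
move=> eqKG psdK a; rewrite /quad_form.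
by under eq_bigr do under eq_bigr do rewrite -eqKG; exact: psdK.
Qed.

Lemma psd_gram (I : Type) (r : seq I) (v : 'I_n -> I -> R) :
  psd_kernel (fun j k => \sum_(i <- r) v j i * v k i).
Proof.
move=> a; rewrite /quad_form.
suff -> : \sum_j \sum_k a j * a k * \sum_(i <- r) v j i * v k i =
          \sum_(i <- r) (\sum_j a j * v j i) ^+ 2.
  by apply: sumr_ge0 => i _; exact: sqr_ge0.
under [RHS]eq_bigr => i _ do rewrite expr2 mulr_suml.
under [RHS]eq_bigr => i _ do under eq_bigr => j _ do rewrite mulr_sumr.
rewrite [RHS]exchange_big /=; apply: eq_bigr => j _.
rewrite [RHS]exchange_big /=; apply: eq_bigr => k _.
rewrite mulr_sumr; apply: eq_bigr => i _; ring.
Qed.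

Lemma psd_kernel_diag_scale d K :
  psd_kernel K -> psd_kernel (fun j k => d j * d k * K j k).
Proof.
move=> psdK a; have := psdK (fun j => a j * d j); rewrite /quad_form.
have E j k : a j * d j * (a k * d k) * K j k = a j * a k * (d j * d k * K j k) by ring.
by under eq_bigr do under eq_bigr do rewrite E.
Qed.

(* The p-th Schur power of a Gram kernel is the Gram kernel of the p-fold
   tensor powers of its vectors. *)
Lemma psd_gram_exprn (I : finType) (v : 'I_n -> I -> R) p :
  psd_kernel (fun j k => (\sum_i v j i * v k i) ^+ p).
Proof.
apply: (eq_psd_kernel _ (psd_gram (index_enum {ffun 'I_p -> I})
                                   (fun j f => \prod_l v j (f l)))) => j k.
symmetry; rewrite -{1}(card_ord p) -prodr_const bigA_distr_bigA /=.
by apply: eq_bigr => f _; rewrite -big_split.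
Qed.

Lemma psd_kernel_conic (K : nat -> 'I_n -> 'I_n -> R) (c : nat -> R) N :
  (forall p, 0 <= c p) -> (forall p, psd_kernel (K p)) ->
  psd_kernel (fun j k => \sum_(p < N) c p * K p j k).
Proof.
move=> c_ge0 psdK a; rewrite /quad_form.
under eq_bigr do under eq_bigr do rewrite mulr_sumr.
under eq_bigr do rewrite exchange_big.
rewrite exchange_big /=; apply: sumr_ge0 => p _.
have -> : \sum_j \sum_k a j * a k * (c p * K p j k) = c p * quad_form (K p) a.
  rewrite /quad_form mulr_sumr; apply: eq_bigr => j _.
  by rewrite mulr_sumr; apply: eq_bigr => k _; ring.
exact: mulr_ge0 (c_ge0 p) (psdK p a).
Qed.

Lemma psd_kernel_lim (K : nat -> 'I_n -> 'I_n -> R) L :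
  (forall N, psd_kernel (K N)) -> (forall j k, Un_cv (K^~ j ^~ k) (L j k)) ->
  psd_kernel L.
Proof.
move=> psdK cvgK a; apply/RleP.
apply: (@Rle_cv_lim (fun=> 0) (fun N => quad_form (K N) a)).
- by move=> N; apply/RleP; exact: psdK.
- exact: Un_cv_const.
- apply: Un_cv_sum => j; apply: Un_cv_sum => k.
  by apply: CV_mult; [exact: Un_cv_const | exact: cvgK].
Qed.

Lemma psd_exp_gram (I : finType) (v : 'I_n -> I -> R) t : 0 <= t ->
  psd_kernel (fun j k => exp (t * \sum_i v j i * v k i)).
Proof.
move=> t_ge0.
pose tG j k := t * \sum_i v j i * v k i.
apply: (@psd_kernel_lim (fun N j k => E1 (tG j k) N) (fun j k => exp (tG j k)));
  last by move=> j k; exact: E1_cvg.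
have coef_ge0 p : 0 <= (p`!%:R)^-1 * t ^+ p.
  by rewrite mulr_ge0 ?invr_ge0 ?ler0n ?exprn_ge0.
move=> N; apply: (eq_psd_kernel _ (psd_kernel_conic N.+1 coef_ge0 (psd_gram_exprn v))).
move=> j k; rewrite /E1 sum_f_R0E big_mkord; apply: eq_bigr => p _.
by rewrite RmultE RinvE INRE factE RpowE exprMn mulrA.
Qed.

Lemma quad_form_sqdist_le0 (N : 'I_n -> R) G a :
  psd_kernel G -> \sum_j a j = 0 ->
  quad_form (fun j k => N j + N k - 2 * G j k) a <= 0.
Proof.
move=> psdG sum_a0; rewrite /quad_form.
have E j k : a j * a k * (N j + N k - 2 * G j k) =
    a j * N j * a k + a j * (a k * N k) - 2 * (a j * a k * G j k) by ring.
under eq_bigr do under eq_bigr do rewrite E.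
under eq_bigr do rewrite sumrB big_split /= -!mulr_sumr sum_a0 mulr0 add0r.
rewrite sumrB -mulr_suml sum_a0 mul0r add0r -mulr_sumr oppr_le0.
exact: mulr_ge0 (psdG a).
Qed.

Lemma quad_form_complex K (c : 'I_n -> complex R) : (forall j k, K j k = K k j) ->
  \sum_j \sum_k c j * (c k)^* * (K j k)%:C =
  (quad_form K (fun j => complex.Re (c j)) + quad_form K (fun j => complex.Im (c j)))%:C.
Proof.
move=> K_sym.
pose im_part j k := (complex.Im (c j) * complex.Re (c k) -
                     complex.Re (c j) * complex.Im (c k)) * K j k.
have E j k : c j * (c k)^* * (K j k)%:C =
    ((complex.Re (c j) * complex.Re (c k) + complex.Im (c j) * complex.Im (c k)) * K j k)%:C
    + 'i%C * (im_part j k)%:C.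
  rewrite /im_part; case: (c j) => ? ?; case: (c k) => ? ?.
  by apply/eqP; rewrite eq_complex /=; apply/andP; split; apply/eqP; ring.
have im_part0 : \sum_j \sum_k im_part j k = 0.
  suff S : \sum_j \sum_k im_part j k = - \sum_j \sum_k im_part j k by lra.
  rewrite {1}exchange_big /= -sumrN; apply: eq_bigr => j _.
  by rewrite -sumrN; apply: eq_bigr => k _; rewrite /im_part (K_sym k j); ring.
under eq_bigr do under eq_bigr do rewrite E.
under eq_bigr do rewrite big_split /= -mulr_sumr -!rmorph_sum.
rewrite big_split /= -mulr_sumr -!rmorph_sum im_part0 mulr0 addr0 /quad_form.
by congr (_ %:C); rewrite -big_split; apply: eq_bigr => j _;
   rewrite -big_split; apply: eq_bigr => k _ /=; ring.
Qed.

End Kernels.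

Lemma fg_inv_cons a k w : fg_inv ((a, k) :: w) = rcons (fg_inv w) (a, - k).
Proof. by rewrite /fg_inv /= rev_cons. Qed.

Lemma fg_mul_rcons u p w : fg_mul (rcons u p) w = fg_mul u (push p w).
Proof. by rewrite /fg_mul -cats1 foldr_cat. Qed.

Lemma reduced_push p w : reduced w -> reduced (push p w).
Proof.
case: p => a k; case: w => [|[b l] w] /=; first by case: (eqVneq k 0) => //= ->.
move=> /andP[/andP[l_neq0 hd_w] red_w].
have [->|a_neq_b] := eqVneq a b; first by case: (eqVneq (k + l) 0) => //= ->; rewrite hd_w.
by case: (eqVneq k 0) => [_|k_neq0] /=; rewrite ?k_neq0 ?a_neq_b l_neq0 hd_w.
Qed.

Lemma reduced_mul_inv u w : reduced u -> reduced w -> reduced (fg_mul (fg_inv u) w).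
Proof.
elim: u w => [|[a k] u IH] w //= /andP[_ red_u] red_w.
by rewrite fg_inv_cons fg_mul_rcons; apply/IH/reduced_push.
Qed.

Lemma norm2sq_cons a k w : (norm2sq ((a, k) :: w))%:Z = k ^+ 2 + (norm2sq w)%:Z.
Proof.
rewrite /norm2sq big_cons PoszD; congr (_ + _).
by rewrite /= -abszX abszE ger0_norm ?sqr_ge0.
Qed.

Lemma norm2sq_inv w : norm2sq (fg_inv w) = norm2sq w.
Proof. by rewrite /norm2sq /fg_inv big_rev big_map; apply: eq_bigr => p _; rewrite abszN. Qed.

Lemma norm2sq_eq0 w : reduced w -> (norm2sq w == 0%N) = (w == [::]).
Proof.
case: w => [|[a k] w]; first by rewrite /norm2sq big_nil.
move=> /andP[/andP[k_neq0 _] _].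
rewrite -eqz_nat norm2sq_cons paddr_eq0 ?sqr_ge0 //.
by rewrite sqrf_eq0 (negbTE k_neq0).
Qed.

(* <v_u, v_w> (see overlap_coord): exponent products along the common initial
   syllables of u and w, plus that of the first disagreeing syllables when
   they share their generator. *)
Fixpoint overlap (u w : word) : int :=
  match u, w with
  | (a, k) :: u', (b, l) :: w' =>
      if a == b then (if k == l then k * l + overlap u' w' else k * l) else 0
  | _, _ => 0
  end.

Lemma overlap_self w : overlap w w = (norm2sq w)%:Z.
Proof.
elim: w => [|[a k] w IH] /=; first by rewrite /norm2sq big_nil.
by rewrite !eqxx norm2sq_cons IH expr2.
Qed.

Lemma overlap_cons_head u a l w :
  (if u is (b, _) :: _ then a != b else true) -> overlap u ((a, l) :: w) = 0.
Proof. by case: u => [|[b k] u] //=; rewrite eq_sym => /negbTE ->. Qed.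

Lemma norm2sq_mul_inv u w : reduced u -> reduced w ->
  (norm2sq (fg_mul (fg_inv u) w))%:Z =
  (norm2sq u)%:Z + (norm2sq w)%:Z - 2 * overlap u w.
Proof.
elim: u w => [|[a k] u IH] w.
  by move=> _ _; rewrite /norm2sq big_nil mulr0 subr0 add0r.
move=> /= /andP[/andP[k_neq0 hd_u] red_u] red_w.
rewrite fg_inv_cons fg_mul_rcons IH ?reduced_push // norm2sq_cons.
case: w red_w => [|[b l] w] _ /=.
  by rewrite oppr_eq0 (negbTE k_neq0) overlap_cons_head // norm2sq_cons /norm2sq big_nil; ring.
have [<-|_] := eqVneq a b; last first.
  by rewrite oppr_eq0 (negbTE k_neq0) overlap_cons_head // !norm2sq_cons; ring.
have [->|k_neq_l] := eqVneq k l; first by rewrite addNr eqxx norm2sq_cons; ring.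
rewrite [- k + l]addrC subr_eq0 eq_sym (negbTE k_neq_l) overlap_cons_head //.
by rewrite !norm2sq_cons; ring.
Qed.

Lemma mul_inv_eq_nil u w : reduced u -> reduced w ->
  fg_mul (fg_inv u) w = [::] -> u = w.
Proof.
elim: u w => [|[a k] u IH] w; first by move=> _ _ /= ->.
move=> /= /andP[/andP[k_neq0 hd_u] red_u] red_w.
rewrite fg_inv_cons fg_mul_rcons => /(IH _ red_u (reduced_push _ red_w)) u_eq.
move: hd_u; rewrite {}u_eq.
case: w red_w => [|[b l] w] _ /=; first by rewrite oppr_eq0 (negbTE k_neq0) eqxx.
have [<-|_] := eqVneq a b; last by rewrite oppr_eq0 (negbTE k_neq0) eqxx.
by rewrite [- k + l]addrC subr_eq0; case: eqVneq => [->|] //=; rewrite eqxx.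
Qed.

(* The coordinate of w at the position (p, a): the exponent of the syllable
   that follows the prefix p of w, provided that syllable is a power of the
   generator a; 0 otherwise. *)
Fixpoint coord (w p : word) (a : nat) : int :=
  match w, p with
  | [::], _ => 0
  | (b, k) :: w', [::] => if b == a then k else 0
  | s :: w', t :: p' => if t == s then coord w' p' a else 0
  end.

Fixpoint coord_support (w : word) : seq (word * nat) :=
  if w is s :: w' then
    ([::], s.1) :: [seq (s :: q.1, q.2) | q <- coord_support w']
  else [::].

Lemma uniq_coord_support w : uniq (coord_support w).
Proof.
elim: w => //= s w IH; rewrite map_inj_uniq ?IH; last by move=> [? ?] [? ?] [-> ->].
by rewrite andbT; apply/mapP => -[].
Qed.

Lemma coord_supportP w p a : coord w p a != 0 -> (p, a) \in coord_support w.
Proof.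
elim: w p => [|[b k] w IH] [|t p] //=.
  by case: (eqVneq b a) => [->|] //= _; rewrite mem_head.
case: (eqVneq t (b, k)) => [->|] //= /IH p_in; rewrite in_cons; apply/orP; right.
exact: (map_f (fun q => ((b, k) :: q.1, q.2)) p_in).
Qed.

Lemma overlap_coord u w :
  overlap u w = \sum_(q <- coord_support u) coord u q.1 q.2 * coord w q.1 q.2.
Proof.
elim: u w => [|[a k] u IH] w; first by rewrite big_nil; case: w.
rewrite /= big_cons big_map /= eqxx.
case: w => [|[b l] w] /=.
  by rewrite mulr0 big1 ?addr0 // => q _; rewrite mulr0.
rewrite eqxx xpair_eqE [b == a]eq_sym.
have [_|_] := eqVneq a b; last first.
  by rewrite mulr0 add0r big1 // => q _; rewrite mulr0.
have [<-|_] := eqVneq k l; first by rewrite IH.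
by rewrite big1 ?addr0 // => q _; rewrite mulr0.
Qed.

Section WordFamily.
Variables (n : nat) (x : 'I_n -> word).
Hypothesis reduced_x : forall j, reduced (x j).

Definition dist2 j k := norm2sq (fg_mul (fg_inv (x j)) (x k)).

Definition family_support := undup (flatten [seq coord_support (x j) | j <- enum 'I_n]).

Definition coordv j (i : 'I_(size family_support)) : R :=
  let q := nth ([::], 0%N) family_support i in (coord (x j) q.1 q.2)%:~R.

Definition gram j k := \sum_i coordv j i * coordv k i.

Lemma overlap_gram j k : (overlap (x j) (x k))%:~R = gram j k.
Proof.
have -> : overlap (x j) (x k) =
    \sum_(q <- family_support) coord (x j) q.1 q.2 * coord (x k) q.1 q.2.
  rewrite overlap_coord; apply: perm_big_supp.
  apply: uniq_perm; rewrite ?filter_uniq ?uniq_coord_support ?undup_uniq // => q.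
  rewrite !mem_filter mem_undup; apply: andb_id2l.
  rewrite mulf_eq0 negb_or => /andP[cj_neq0 _].
  have q_in : q \in coord_support (x j) by case: q cj_neq0 => p a /coord_supportP.
  rewrite q_in; symmetry; apply/flattenP; exists (coord_support (x j)) => //.
  by apply: map_f; rewrite mem_enum.
by rewrite rmorph_sum (big_nth ([::], 0%N)) big_mkord; apply: eq_bigr => i _; rewrite rmorphM.
Qed.

Lemma dist2E j k :
  (dist2 j k)%:R = (norm2sq (x j))%:R + (norm2sq (x k))%:R - 2 * gram j k :> R.
Proof.
have := congr1 (fun z : int => z%:~R : R) (norm2sq_mul_inv (reduced_x j) (reduced_x k)).
by rewrite rmorphB rmorphD rmorphM /= overlap_gram.
Qed.

Lemma dist2C j k : dist2 j k = dist2 k j.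
Proof.
have gramC : gram j k = gram k j by apply: eq_bigr => i _; rewrite mulrC.
by apply/eqP; rewrite -(eqr_nat R) !dist2E gramC; apply/eqP; ring.
Qed.

Lemma dist2_eq0 j k : (dist2 j k == 0%N) = (x j == x k).
Proof.
rewrite /dist2; apply/idP/eqP => [|<-].
  by rewrite norm2sq_eq0 ?reduced_mul_inv // => /eqP; exact: mul_inv_eq_nil.
rewrite -eqz_nat norm2sq_mul_inv // overlap_self; apply/eqP; ring.
Qed.

Lemma signr_dist2 j k :
  (-1) ^+ dist2 j k = (-1) ^+ norm2sq (x j) * (-1) ^+ norm2sq (x k) :> R.
Proof.
rewrite -exprD; apply: (@signr_eq_mod2 _ _ (overlap (x j) (x k))).
by rewrite norm2sq_mul_inv // PoszD.
Qed.

Lemma psd_pow_dist2_gt0 s : 0 < s <= 1 -> psd_kernel (fun j k => s ^+ dist2 j k).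
Proof.
move=> s_range; have s_gt0 : 0 < s by case/andP: s_range.
have L_le0 := ln_le0 s_range; set L := ln s in L_le0 *.
have t_ge0 : 0 <= - 2 * L by rewrite mulNr oppr_ge0 mulr_ge0_le0.
(* s^d = exp (L d), and d_jk = N_j + N_k - 2 gram_jk splits the exponential. *)
apply: (eq_psd_kernel _ (psd_kernel_diag_scale (fun j => exp (L * (norm2sq (x j))%:R))
                          (psd_exp_gram coordv t_ge0))) => j k.
rewrite !expRD -[in RHS](exp_ln s (elimT RltP s_gt0)) -/L expRX -[L *+ _]mulr_natr.
rewrite [(dist2 j k)%:R]dist2E.
by congr exp; rewrite /gram !RplusE; ring.
Qed.

Lemma psd_pow0_dist2 : psd_kernel (fun j k => 0 ^+ dist2 j k).
Proof.
pose W := undup [seq x j | j <- enum 'I_n].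
apply: (eq_psd_kernel _ (psd_gram W (fun j w => (x j == w)%:R))) => j k.
rewrite expr0n dist2_eq0 (bigD1_seq (x j)) ?undup_uniq //=; last first.
  by rewrite mem_undup; apply: map_f; rewrite mem_enum.
rewrite eqxx mul1r big1 ?addr0 1?eq_sym // => w w_neq.
by rewrite eq_sym (negbTE w_neq) mul0r.
Qed.

Lemma psd_pow_dist2 s : -1 <= s <= 1 -> psd_kernel (fun j k => s ^+ dist2 j k).
Proof.
move=> /andP[s_geN1 s_le1].
have [s_lt0|s_gt0|->] := ltgtP s 0; last exact: psd_pow0_dist2.
  have Ns_range : 0 < - s <= 1 by rewrite oppr_gt0 s_lt0 lerNl.
  apply: (eq_psd_kernel _ (psd_kernel_diag_scale (fun j => (-1) ^+ norm2sq (x j))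
                                                 (psd_pow_dist2_gt0 Ns_range))) => j k.
  by rewrite -signr_dist2 -exprMn mulN1r opprK.
by apply: psd_pow_dist2_gt0; rewrite s_gt0.
Qed.

Lemma quad_form_dist2_le0 a : \sum_j a j = 0 -> quad_form (fun j k => (dist2 j k)%:R) a <= 0.
Proof.
move=> sum_a0; rewrite /quad_form.
under eq_bigr do under eq_bigr do rewrite [(dist2 _ _)%:R]dist2E.
exact: quad_form_sqdist_le0 (psd_gram (index_enum _) coordv) sum_a0.
Qed.

End WordFamily.

Lemma pos_def_Fr_pow r s : -1 <= s <= 1 -> pos_def_Fr r (fun g => (s ^+ norm2sq g)%:C).
Proof.
move=> s_range n x c x_in; have red_x j : reduced (x j) by case/andP: (x_in j).
rewrite (quad_form_complex (K := fun j k => s ^+ dist2 x j k)); last first.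
  by move=> j k; rewrite (dist2C red_x).
by rewrite ler0c addr_ge0 ?psd_pow_dist2.
Qed.

Lemma cond_neg_def_Fr_norm2sq r : cond_neg_def_Fr r (fun g => (norm2sq g)%:R).
Proof.
split=> [g _|n x c x_in sum_c0].
  by rewrite norm2sq_inv conjC_nat.
have red_x j : reduced (x j) by case/andP: (x_in j).
under eq_bigr do under eq_bigr do rewrite -(rmorph_nat (real_complex R)).
rewrite (quad_form_complex (K := fun j k => (dist2 x j k)%:R)); last first.
  by move=> j k; rewrite (dist2C red_x).
rewrite -(rmorph0 (real_complex R)) lecR -[0]addr0 lerD ?quad_form_dist2_le0 //.
  by rewrite -(raddf_sum (@complex.Re R : Rcomplex R -> R)) sum_c0.
by rewrite -(raddf_sum (@complex.Im R : Rcomplex R -> R)) sum_c0.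
Qed.

Theorem proposition4p2 (r : rank) (hr : if r is Some n then (0 < n)%nat else true) :
  cond_neg_def_Fr r (fun g => (norm2sq g)%:R) /\
  (forall s : Rdefinitions.R, 0 <= s <= 1 ->
     pos_def_Fr r (fun g => real_complex _ (s ^+ norm2sq g))) /\
  pos_def_Fr r (fun g => (-1) ^+ norm2sq g) /\
  (forall s : Rdefinitions.R, -1 <= s <= 1 ->
     pos_def_Fr r (fun g => real_complex _ (s ^+ norm2sq g))).
Proof.
split; [exact: cond_neg_def_Fr_norm2sq | split; [|split]].
- move=> s /andP[s_ge0 s_le1]; apply: pos_def_Fr_pow.
  by rewrite s_le1 andbT (le_trans _ s_ge0) ?lerN10.
- move=> n x c x_in.
  under eq_bigr do under eq_bigr do rewrite -(rmorphN1 (real_complex R)) -rmorphXn.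
  by apply: (pos_def_Fr_pow _ c x_in); apply/andP; split; lra.
- exact: pos_def_Fr_pow.
Qed.
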